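(* Among the graphs in $\mathcal{C}_3$, exactly $F_0$ and $F_1(5)$ are comparability graphs; that is, $F_0$ and $F_1(5)$ are comparability graphs, while no even $k$-sun ($k\ge4$ even), no $F_1(k)$ with odd $k\ge7$, and no $F_2(k)$ with odd $k\ge5$ is a comparability graph.
   Context: A comparability graph is a graph admitting a transitive orientation. The graphs (split graphs with clique $C$, independent set $I$, and listed neighbourhoods): $F_0$: $C=\{0,c_1,c_2,c_3,c_4\}$, $I=\{a_1,a_2,a_3\}$, $N(a_1)=\{0,c_2,c_3\}$, $N(a_2)=\{0,c_3,c_4\}$, $N(a_3)=\{0,c_1,c_4\}$. Even $k$-sun ($k\ge4$ even): $C=\{c_1,\dots,c_k\}$, $I=\{a_1,\dots,a_k\}$, $N(a_i)=\{c_i,c_{i+1}\}$ ($1\le i\le k-1$), $N(a_k)=\{c_1,c_k\}$. $F_1(k)$ ($k\ge5$ odd): $C=\{c_1,\dots,c_{k-1}\}$, $I=\{b_1,b_2,a_1,\dots,a_{k-2}\}$, $N(b_1)=\{c_1,\dots,c_{k-2}\}$, $N(b_2)=\{c_2,\dots,c_{k-1}\}$, $N(a_i)=\{c_i,c_{i+1}\}$ ($1\le i\le k-2$). $F_2(k)$ ($k\ge5$ odd): $C=\{c_1,\dots,c_k\}$, $I=\{b,a_1,\dots,a_{k-1}\}$, $N(b)=\{c_2,\dots,c_{k-1}\}$, $N(a_i)=\{c_i,c_{i+1}\}$ ($1\le i\le k-1$). $\mathcal{C}_3$ is the family of all these graphs. *)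

From mathcomp Require Import all_boot.
Set Implicit Arguments. Unset Strict Implicit. Unset Printing Implicit Defensive.

(* A (simple) graph is a symmetric irreflexive relation on a finite type. *)

Definition transitive_orientation (T : finType) (E : rel T) (o : rel T) : Prop :=
  [/\ forall x y, E x y = (o x y || o y x),
      forall x y, o x y -> ~~ o y x
    & transitive o].

Definition comparability_graph (T : finType) (E : rel T) : Prop :=
  exists o : rel T, transitive_orientation E o.

Definition split_graph (C I : finType) (nb : I -> C -> bool) : rel (C + I) :=
  fun u v => match u, v with
  | inl x, inl y => x != y
  | inl x, inr a => nb a x
  | inr a, inl x => nb a x
  | inr _, inr _ => false
  end.

(* F_0: clique 'I_5 with index 0 = vertex "0" and index i = c_i (1<=i<=4);
   independent set 'I_3 with index j = a_(j+1). *)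
Definition F0_nb (a : 'I_3) (x : 'I_5) : bool :=
  (x : nat) \in nth [::] [:: [:: 0; 2; 3]; [:: 0; 3; 4]; [:: 0; 1; 4]] a.
Definition F0 : rel ('I_5 + 'I_3) := split_graph F0_nb.

(* Even k-sun: clique 'I_k, index i = c_(i+1); independent 'I_k, index j = a_(j+1).
   a_(j+1) is adjacent to c_(j+1) and c_(j+2) (indices taken cyclically,
   so a_k is adjacent to c_k and c_1). *)
Definition sun_nb (k : nat) (a : 'I_k) (x : 'I_k) : bool :=
  ((x : nat) == a) || ((x : nat) == (a.+1 %% k)).
Definition sun (k : nat) : rel ('I_k + 'I_k) := split_graph (@sun_nb k).

(* F_1(k): clique 'I_(k-1), index i = c_(i+1);
   independent set bool + 'I_(k-2): inl false = b_1, inl true = b_2,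
   inr j = a_(j+1). *)
Definition F1_nb (k : nat) (v : bool + 'I_(k - 2)) (x : 'I_(k - 1)) : bool :=
  match v with
  | inl false => (x : nat) < k - 2          (* c_1 .. c_(k-2) *)
  | inl true => 1 <= (x : nat)              (* c_2 .. c_(k-1) *)
  | inr j => ((x : nat) == j) || ((x : nat) == j.+1)  (* c_(j+1), c_(j+2) *)
  end.
Definition F1 (k : nat) : rel ('I_(k - 1) + (bool + 'I_(k - 2))) :=
  split_graph (@F1_nb k).

(* F_2(k): clique 'I_k, index i = c_(i+1);
   independent set option 'I_(k-1): None = b, Some j = a_(j+1). *)
Definition F2_nb (k : nat) (v : option 'I_(k - 1)) (x : 'I_k) : bool :=
  match v with
  | None => (1 <= (x : nat)) && ((x : nat) <= k - 2)   (* c_2 .. c_(k-1) *)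
  | Some j => ((x : nat) == j) || ((x : nat) == j.+1)  (* c_(j+1), c_(j+2) *)
  end.
Definition F2 (k : nat) : rel ('I_k + option 'I_(k - 1)) := split_graph (@F2_nb k).

Arguments sun k : clear implicits.
Arguments F1 k : clear implicits.
Arguments F2 k : clear implicits.

From mathcomp Require Import all_boot zify.

Set Implicit Arguments.
Unset Strict Implicit.
Unset Printing Implicit Defensive.

(* In a transitive orientation, two edges xw and xy with w, y non-adjacent
   must both leave x or both enter x.  In each excluded graph this forcing
   propagates around a triangle of clique vertices with private neighbours
   (around the two diagonals for the 4-sun) and ends up orienting some edge
   both ways.  F_0 and F_1(5) are instead oriented downwards along a suitable
   ranking of their vertices. *)

Lemma split_graph_sym (C I : finType) (nb : I -> C -> bool) :
  symmetric (split_graph nb).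
Proof. by case=> [x|a] [y|b] //=; rewrite eq_sym. Qed.

Section RankOrientation.

Variables (T : finType) (E : rel T) (r : T -> nat).
Hypotheses (E_sym : symmetric E) (rank_edge : forall x y, E x y -> r x != r y).
Hypothesis rank_closed :
  forall x y z, E x y -> E y z -> r z < r y < r x -> E x z.

Lemma rank_comparability_graph : comparability_graph E.
Proof.
exists [rel x y | E x y && (r y < r x)]; split=> [x y | x y | y x z] /=.
- rewrite -(E_sym x y) -andb_orr; case Exy: (E x y) => //=.
  by rewrite -neq_ltn eq_sym rank_edge.
- by case/andP=> _ ltyx; rewrite negb_and -leqNgt ltnW ?orbT.
- case/andP=> Exy ltyx /andP[Eyz ltzy].
  by rewrite (rank_closed Exy Eyz) ?ltzy ?(ltn_trans ltzy).
Qed.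

End RankOrientation.

Section TransitiveOrientation.

Variables (T : finType) (E o : rel T).
Hypothesis oE : transitive_orientation E o.

Lemma orientation_edgeC x y : E x y = E y x.
Proof. by case: oE => tot _ _; rewrite !tot orbC. Qed.

Lemma orientation_opp x y : E x y -> o y x = ~~ o x y.
Proof.
case: oE => tot asym _; rewrite tot.
by case oxy: (o x y) => //= _; apply/negbTE/asym.
Qed.

Lemma orientation_forced x w y : E x w -> E x y -> ~~ E w y -> o x w = o x y.
Proof.
case: oE => tot _ trans Exw Exy Nwy.
have Nyw : ~~ E y w by rewrite orientation_edgeC.
case oxw: (o x w); case oxy: (o x y) => //.
- move: Exy Nyw; rewrite !tot oxy /= => oyx.
  by rewrite (trans _ _ _ oyx oxw).
- move: Exw Nwy; rewrite !tot oxw /= => owx.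
  by rewrite (trans _ _ _ owx oxy).
Qed.

Lemma orientation_pendants x y p q :
  E x y -> E x p -> ~~ E p y -> E y q -> ~~ E q x -> o x p = ~~ o y q.
Proof.
move=> Exy Exp Npy Eyq Nqx.
have Eyx : E y x by rewrite orientation_edgeC.
rewrite (orientation_forced Exp Exy Npy) (orientation_forced Eyq Eyx Nqx).
by rewrite (orientation_opp Exy) negbK.
Qed.

End TransitiveOrientation.

Lemma private_triangle_not_comparability (T : finType) (E : rel T) x y z x' y' z' :
  E x y -> E y z -> E z x ->
  E x x' -> ~~ E x' y -> ~~ E x' z ->
  E y y' -> ~~ E y' z -> ~~ E y' x ->
  E z z' -> ~~ E z' x -> ~~ E z' y ->
  ~ comparability_graph E.
Proof.
move=> Exy Eyz Ezx Ex Nx'y Nx'z Ey Ny'z Ny'x Ez Nz'x Nz'y [o oE].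
have Exz : E x z by rewrite (orientation_edgeC oE).
have Eyx : E y x by rewrite (orientation_edgeC oE).
have Ezy : E z y by rewrite (orientation_edgeC oE).
have ox : o x y = o x z.
  by rewrite -(orientation_forced oE Ex Exy Nx'y) (orientation_forced oE Ex Exz Nx'z).
have oy : o y z = o y x.
  by rewrite -(orientation_forced oE Ey Eyz Ny'z) (orientation_forced oE Ey Eyx Ny'x).
have oz : o z x = o z y.
  by rewrite -(orientation_forced oE Ez Ezx Nz'x) (orientation_forced oE Ez Ezy Nz'y).
have := orientation_opp oE Eyz.
rewrite -oz (orientation_opp oE Exz) -ox oy (orientation_opp oE Exy) negbK.
by case: (o x y).
Qed.

Lemma split_private_triangle_not_comparability (C I : finType) (nb : I -> C -> bool)
    x y z a b c :
  x != y -> y != z -> z != x ->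
  nb a x -> ~~ nb a y -> ~~ nb a z ->
  nb b y -> ~~ nb b z -> ~~ nb b x ->
  nb c z -> ~~ nb c x -> ~~ nb c y ->
  ~ comparability_graph (split_graph nb).
Proof.
by move=> *; apply: (private_triangle_not_comparability (x := inl x) (y := inl y)
  (z := inl z) (x' := inr a) (y' := inr b) (z' := inr c)).
Qed.

Lemma sun4_not_comparability : ~ comparability_graph (sun 4).
Proof.
case=> o oE.
pose c i : 'I_4 + 'I_4 := inl (Ordinal (ltn_pmod i (isT : 0 < 4))).
pose a i : 'I_4 + 'I_4 := inr (Ordinal (ltn_pmod i (isT : 0 < 4))).
have o02 : o (c 0) (c 2) = ~~ o (c 1) (c 3).
  rewrite -(orientation_forced oE (w := a 3)) //.
  rewrite (orientation_pendants oE (y := c 1) (q := a 1)) //.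
  by rewrite (orientation_forced oE (y := c 3)).
have o13 : o (c 1) (c 3) = ~~ o (c 2) (c 0).
  rewrite -(orientation_forced oE (w := a 0)) //.
  rewrite (orientation_pendants oE (y := c 2) (q := a 2)) //.
  by rewrite (orientation_forced oE (y := c 0)).
move: o13; rewrite (orientation_opp oE (x := c 0) (y := c 2)) // negbK o02.
by case: (o (c 1) (c 3)).
Qed.

Lemma sun_not_comparability k : 6 <= k -> ~ comparability_graph (sun k).
Proof.
move=> k6; have k_gt0 : 0 < k by lia.
pose c i := Ordinal (ltn_pmod i k_gt0).
apply: (split_private_triangle_not_comparability (x := c 0) (y := c 2) (z := c 4)
          (a := c 0) (b := c 2) (c := c 4));
  by rewrite /sun_nb -?val_eqE /= ?modn_small //; lia.
Qed.

Lemma F1_not_comparability k : 7 <= k -> ~ comparability_graph (F1 k).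
Proof.
move=> k7; have k1_gt0 : 0 < k - 1 by lia. have k2_gt0 : 0 < k - 2 by lia.
pose c i := Ordinal (ltn_pmod i k1_gt0).
pose a i : bool + 'I_(k - 2) := inr (Ordinal (ltn_pmod i k2_gt0)).
apply: (split_private_triangle_not_comparability (x := c 0) (y := c 2) (z := c 4)
          (a := a 0) (b := a 2) (c := a 4));
  by rewrite -?val_eqE /= ?modn_small //; lia.
Qed.

Lemma F2_not_comparability k : 5 <= k -> ~ comparability_graph (F2 k).
Proof.
move=> k5; have k_gt0 : 0 < k by lia. have k1_gt0 : 0 < k - 1 by lia.
pose c i := Ordinal (ltn_pmod i k_gt0).
pose a i : option 'I_(k - 1) := Some (Ordinal (ltn_pmod i k1_gt0)).
apply: (split_private_triangle_not_comparability
          (x := c 0) (y := c 2) (z := c (k - 1)) (a := a 0) (b := a 1) (c := a (k - 2)));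
  by rewrite -?val_eqE /= ?modn_small //; lia.
Qed.

(* Vertices by decreasing rank: c3, c2, a3, c1, a2, c4, a1, 0. *)
Definition F0_rank (v : 'I_5 + 'I_3) : nat :=
  match v with
  | inl x => nth 0 [:: 0; 4; 6; 7; 2] x
  | inr a => nth 0 [:: 1; 3; 5] a
  end.

Ltac case_F0_vertex v := case: v => [[[|[|[|[|[|?]]]]] ?] | [[|[|[|?]]] ?]] //.

Lemma F0_comparability : comparability_graph F0.
Proof.
apply: (rank_comparability_graph (r := F0_rank)); first exact: split_graph_sym.
  by move=> x y; case_F0_vertex x; case_F0_vertex y.
by move=> x y z; case_F0_vertex x; case_F0_vertex y; case_F0_vertex z.
Qed.

(* Vertices by decreasing rank: c2, c1, a2, b1, b2, a3, a1, c4, c3. *)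
Definition F1_5_rank (v : 'I_(5 - 1) + (bool + 'I_(5 - 2))) : nat :=
  match v with
  | inl x => nth 0 [:: 7; 8; 0; 1] x
  | inr (inl b) => if b then 4 else 5
  | inr (inr a) => nth 0 [:: 2; 6; 3] a
  end.

Ltac case_F1_5_vertex v :=
  case: v => [[[|[|[|[|?]]]] ?] | [[|] | [[|[|[|?]]] ?]]] //.

Lemma F1_5_comparability : comparability_graph (F1 5).
Proof.
apply: (rank_comparability_graph (r := F1_5_rank)); first exact: split_graph_sym.
  by move=> x y; case_F1_5_vertex x; case_F1_5_vertex y.
by move=> x y z; case_F1_5_vertex x; case_F1_5_vertex y; case_F1_5_vertex z.
Qed.

Theorem theorem7 :
  [/\ comparability_graph F0,
      comparability_graph (F1 5),
      (forall k : nat, 4 <= k -> ~~ odd k -> ~ comparability_graph (sun k)),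
      (forall k : nat, 7 <= k -> odd k -> ~ comparability_graph (F1 k))
    & (forall k : nat, 5 <= k -> odd k -> ~ comparability_graph (F2 k))].
Proof.
split.
- exact: F0_comparability.
- exact: F1_5_comparability.
- move=> k k4 k_even.
  have [-> | k6] : k = 4 \/ 6 <= k by lia.
  + exact: sun4_not_comparability.
  + exact: sun_not_comparability.
- by move=> k k7 _; apply: F1_not_comparability.
- by move=> k k5 _; apply: F2_not_comparability.
Qed.
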